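(* Let $r>1$, $p\in(0,1)$, $q=1-p$, and $z\ge 0$. Let $g_z:\mathbb{Z}_+\to\mathbb{R}$ be defined by $g_z(0)=0$ and, for $k\ge 1$, $$g_z(k)=-\sum_{j=k}^{\infty}\frac{r(r+1)\cdots(r+j-1)}{r(r+1)\cdots(r+k-1)}\,\frac{(k-1)!}{j!}\,q^{j-k}\Big[(j-z)^+-\mathbb{E}[(\mathrm{N}_{r,p}-z)^+]\Big].$$ Then for all $k\ge 0$: (i) $|g_z(k)|\le p^{-(r+1)}$; (ii) $|\Delta g_z(k)|\le 2p^{-(r+1)}-p^{-1}$.
   Context: $\mathbb{Z}_+=\{0,1,2,\ldots\}$. $x^+=\max\{x,0\}$. $\mathrm{N}_{r,p}$ denotes a negative binomial random variable with $\mathbb{P}(\mathrm{N}_{r,p}=k)=\binom{r+k-1}{k}p^rq^k=\frac{\Gamma(r+k)}{k!\,\Gamma(r)}p^rq^k$ for $k\in\mathbb{Z}_+$, where $r>1$ and $q=1-p\in(0,1)$. $\Delta g(k)=g(k+1)-g(k)$ is the forward difference. The function $g_z$ solves $q(r+k)g(k+1)-kg(k)=(k-z)^+-\mathbb{E}[(\mathrm{N}_{r,p}-z)^+]$ for $k\in\mathbb{Z}_+$. *)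

From Stdlib Require Import Reals.
From Coquelicot Require Import Coquelicot.
Open Scope R_scope.

(* rising factorial r (r+1) ... (r+n-1); equals Gamma(r+n)/Gamma(r) *)
Fixpoint rising (r : R) (n : nat) : R :=
  match n with
  | O => 1
  | S m => rising r m * (r + INR m)
  end.

Definition pos_part (x : R) : R := Rmax x 0.

Definition nb_pmf (r p : R) (k : nat) : R :=
  rising r k / INR (Factorial.fact k) * Rpower p r * (1 - p) ^ k.

Definition nb_stoploss (r p z : R) : R :=
  Series (fun k => nb_pmf r p k * pos_part (INR k - z)).

(* g_z(0) = 0; for k >= 1,
   g_z(k) = - sum_{j >= k} rising r j / rising r k * (k-1)!/j! * q^(j-k)
              * [ (j - z)^+ - E[(N-z)^+] ]   (summation index j = k + i) *)
Definition g_z (r p z : R) (k : nat) : R :=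
  match k with
  | O => 0
  | S _ =>
    - Series (fun i : nat =>
        rising r (k + i) / rising r k
        * (INR (Factorial.fact (k - 1)) / INR (Factorial.fact (k + i)))
        * (1 - p) ^ i
        * (pos_part (INR (k + i) - z) - nb_stoploss r p z))
  end.

(* Write pi_j = P(N_{r,p} = j).  For K >= 1 the series defining g_z(K) is
   - (1/(K pi_K)) sum_{j>=K} pi_j ((j-z)^+ - E (N-z)^+), a centred tail sum.
   The proof shows the sharper fact -1/p <= g_z <= 0, from which both stated
   bounds follow since 1/p <= p^(-(r+1)).

   1. For any probability vector and nondecreasing f, every centred tail
      sum_{j>=K} pi_j (f_j - E f) is nonnegative; centred tails are additive.
   2. The coefficients c_n = r(r+1)...(r+n-1)/n! satisfy
      (n+1) c_{n+1} = (r+n) c_n, hence sum_n c_n x^n = (1-x)^(-r), so pi is a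
      probability vector with finite mean q r / p.
   3. Summing the recurrence over j >= K gives the centred tail of the
      identity explicitly: K pi_K / p.
   4. Splitting j = (j-z)^+ + min(j,z) into two nondecreasing parts, the
      centred tail of (j-z)^+ lies between 0 and K pi_K / p, which is
      exactly -1/p <= g_z(K) <= 0. *)

From Stdlib Require Import Reals Lra Lia.
From Coquelicot Require Import Coquelicot.
Open Scope R_scope.

Lemma Series_nonneg (a : nat -> R) :
  (forall n, 0 <= a n) -> ex_series a -> 0 <= Series a.
Proof.
  intros a_nonneg a_summable.
  replace 0 with (Series (fun n => 0 * a n)) by (rewrite Series_scal_l; ring).
  apply Series_le; [|exact a_summable].
  intro n; rewrite Rmult_0_l; split; [lra | apply a_nonneg].
Qed.

Section ProbabilityVector.

Variable pi : nat -> R.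
Hypothesis pi_nonneg : forall j, 0 <= pi j.
Hypothesis pi_summable : ex_series pi.
Hypothesis pi_total : Series pi = 1.

Definition mean (f : nat -> R) : R := Series (fun j => pi j * f j).

Definition tail_dev (f : nat -> R) (K : nat) : R :=
  Series (fun i => pi (K + i) * (f (K + i)%nat - mean f)).

Lemma tail_dev_expand (f : nat -> R) (K : nat) :
  ex_series (fun j => pi j * f j) ->
  tail_dev f K = Series (fun i => pi (K + i) * f (K + i)%nat)
                 - mean f * Series (fun i => pi (K + i)).
Proof.
  intro pif_summable; unfold tail_dev.
  rewrite <- Series_scal_l, <- Series_minus.
  - apply Series_ext; intro i; ring.
  - now apply (ex_series_incr_n (fun j => pi j * f j)).
  - apply (ex_series_scal_l (mean f) (fun i => pi (K + i)%nat)).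
    now apply (ex_series_incr_n pi).
Qed.

Lemma tail_dev_add (f g h : nat -> R) (K : nat) :
  ex_series (fun j => pi j * f j) -> ex_series (fun j => pi j * g j) ->
  (forall j, f j + g j = h j) ->
  tail_dev f K + tail_dev g K = tail_dev h K.
Proof.
  intros pif_summable pig_summable fg_h.
  assert (split_sum : forall u v : nat -> R, ex_series u -> ex_series v ->
            (forall j, u j + v j = pi j * h j) ->
            Series (fun j => pi j * h j) = Series u + Series v).
  { intros u v hu hv huv; rewrite <- Series_plus by assumption.
    apply Series_ext; intro j; now rewrite huv. }
  assert (pih_summable : ex_series (fun j => pi j * h j)).
  { apply (ex_series_ext (fun j => pi j * f j + pi j * g j)).
    - intro j; change (pi j * f j + pi j * g j = pi j * h j).
      rewrite <- fg_h; ring.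
    - now apply (@ex_series_plus R_AbsRing R_NormedModule). }
  rewrite !tail_dev_expand by assumption.
  assert (mean_h : mean h = mean f + mean g).
  { unfold mean; apply split_sum; try assumption; intro j; rewrite <- fg_h; ring. }
  assert (tail_h : Series (fun i => pi (K + i) * h (K + i)%nat)
                   = Series (fun i => pi (K + i) * f (K + i)%nat)
                     + Series (fun i => pi (K + i) * g (K + i)%nat)).
  { rewrite <- Series_plus.
    - apply Series_ext; intro i; rewrite <- fg_h; ring.
    - now apply (ex_series_incr_n (fun j => pi j * f j)).
    - now apply (ex_series_incr_n (fun j => pi j * g j)). }
  rewrite mean_h, tail_h; ring.
Qed.

(* The whole centred series sums to 0; if f_K >= E f the tail
   terms are all nonnegative, otherwise the head terms are all nonpositive. *)
Lemma tail_dev_nonneg (f : nat -> R) (K : nat) :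
  Un_growing f -> ex_series (fun j => pi j * f j) -> 0 <= tail_dev f K.
Proof.
  intros f_growing pif_summable.
  set (E := mean f).
  set (w := fun j => pi j * (f j - E)).
  assert (w_summable : ex_series w).
  { apply (ex_series_ext (fun j => pi j * f j - E * pi j)).
    - intro j; change (pi j * f j - E * pi j = pi j * (f j - E)); ring.
    - apply (@ex_series_minus R_AbsRing R_NormedModule); [assumption|].
      exact (ex_series_scal_l E pi pi_summable). }
  assert (w_total : Series w = 0).
  { unfold w; rewrite (Series_ext _ (fun j => pi j * f j - E * pi j))
      by (intro; ring).
    rewrite Series_minus, Series_scal_l, pi_total.
    - unfold E, mean; ring.
    - exact pif_summable.
    - exact (ex_series_scal_l E pi pi_summable). }
  change (0 <= Series (fun i => w (K + i)%nat)).
  destruct K as [|k].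
  { rewrite (Series_ext _ w), w_total by (intro; reflexivity); lra. }
  pose proof (Series_incr_n w (S k) ltac:(lia) w_summable) as head_tail.
  simpl Init.Nat.pred in head_tail.
  destruct (Rle_lt_dec E (f (S k))) as [above | below].
  - apply Series_nonneg; [|now apply ex_series_incr_n].
    intro i; unfold w; apply Rmult_le_pos; [apply pi_nonneg|].
    pose proof (growing_prop f (S k + i) (S k) f_growing ltac:(lia)); lra.
  - assert (head_nonpos : sum_f_R0 w k <= 0).
    { replace 0 with (sum_f_R0 (fun _ => 0) k) by (rewrite sum_cte; ring).
      apply sum_Rle; intros j hj; unfold w.
      pose proof (growing_prop f (S k) j f_growing ltac:(lia)).
      pose proof (pi_nonneg j).
      replace 0 with (pi j * 0) by ring.
      apply Rmult_le_compat_l; lra. }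
    lra.
Qed.

End ProbabilityVector.

Definition nb_coef (r : R) (n : nat) : R := rising r n / INR (Factorial.fact n).

Lemma rising_pos (r : R) (n : nat) : 0 < r -> 0 < rising r n.
Proof.
  intro hr; induction n as [|n IH]; simpl; [lra|].
  apply Rmult_lt_0_compat; [exact IH|]; pose proof (pos_INR n); lra.
Qed.

Lemma nb_coef_pos (r : R) (n : nat) : 0 < r -> 0 < nb_coef r n.
Proof.
  intro hr; apply Rdiv_lt_0_compat; [now apply rising_pos | apply INR_fact_lt_0].
Qed.

Lemma nb_coef_rec (r : R) (n : nat) :
  INR (S n) * nb_coef r (S n) = (r + INR n) * nb_coef r n.
Proof.
  unfold nb_coef; simpl rising.
  change (Factorial.fact (S n)) with (S n * Factorial.fact n)%nat; rewrite mult_INR.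
  pose proof (INR_fact_neq_0 n).
  assert (INR (S n) <> 0) by (apply not_0_INR; lia).
  field; split; assumption.
Qed.

(* The ratio c_{n+1}/c_n = 1 + (r-1)/(n+1) tends to 1, so the power series
   sum_n c_n t^n has radius of convergence 1. *)
Lemma nb_coef_radius (r : R) : 0 < r -> CV_radius (nb_coef r) = 1.
Proof.
  intro hr.
  assert (ratio : forall n, Rabs (nb_coef r (S n) / nb_coef r n)
                            = 1 + (r - 1) * / INR (S n)).
  { intro n; pose proof (nb_coef_rec r n) as rec.
    pose proof (nb_coef_pos r n hr); pose proof (nb_coef_pos r (S n) hr).
    assert (0 < INR (S n)) by (apply lt_0_INR; lia).
    rewrite Rabs_pos_eq by (apply Rlt_le, Rdiv_lt_0_compat; assumption).
    rewrite S_INR in *.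
    replace (nb_coef r (S n)) with ((r + INR n) * nb_coef r n / (INR n + 1))
      by (rewrite <- rec; field; lra).
    field; lra. }
  assert (inv_lim : is_lim_seq (fun n => / INR (S n)) 0).
  { apply (is_lim_seq_incr_1 (fun n => / INR n) 0).
    replace (Finite 0) with (Rbar_inv p_infty) by reflexivity.
    apply is_lim_seq_inv; [apply is_lim_seq_INR | discriminate]. }
  replace 1 with (/ 1) by field.
  apply CV_radius_finite_DAlembert;
    [intro n; apply Rgt_not_eq, nb_coef_pos; exact hr | lra |].
  apply is_lim_seq_ext with (fun n => 1 + (r - 1) * / INR (S n));
    [intro n; symmetry; apply ratio|].
  replace (Finite 1) with (Rbar_plus 1 (Rbar_mult (r - 1) 0))
    by (simpl; f_equal; ring).
  apply is_lim_seq_plus'; [apply is_lim_seq_const|].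
  apply is_lim_seq_mult'; [apply is_lim_seq_const | exact inv_lim].
Qed.

Lemma nb_coef_inside (r t : R) :
  0 < r -> Rabs t < 1 -> Rbar_lt (Rabs t) (CV_radius (nb_coef r)).
Proof. intros hr ht; now rewrite nb_coef_radius. Qed.

Lemma nb_coef_incr_derive (r : R) (n : nat) :
  PS_incr_1 (PS_derive (nb_coef r)) n = INR n * nb_coef r n.
Proof.
  destruct n as [|n]; simpl PS_incr_1; [|reflexivity].
  simpl; change (@zero R_NormedModule) with 0; ring.
Qed.

(* The recurrence translates into the differential equation
   (1 - t) S'(t) = r S(t) for S(t) = sum_n c_n t^n on |t| < 1. *)
Lemma nb_coef_ode (r t : R) : 0 < r -> Rabs t < 1 ->
  (1 - t) * PSeries (PS_derive (nb_coef r)) t = r * PSeries (nb_coef r) t.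
Proof.
  intros hr ht; pose proof (nb_coef_inside r t hr ht) as inside.
  assert (shifted : PSeries (PS_derive (nb_coef r)) t
     = PSeries (PS_plus (PS_scal r (nb_coef r))
                        (PS_incr_1 (PS_derive (nb_coef r)))) t).
  { apply PSeries_ext; intro n; unfold PS_plus, PS_scal.
    rewrite nb_coef_incr_derive; unfold PS_derive.
    change (plus ?a ?b) with (a + b); change (scal ?a ?b) with (a * b).
    rewrite nb_coef_rec; ring. }
  rewrite PSeries_plus, PSeries_scal, PSeries_incr_1 in shifted.
  - lra.
  - apply ex_pseries_scal; [apply Rmult_comm | now apply CV_radius_inside].
  - now apply ex_pseries_incr_1, ex_pseries_derive.
Qed.

(* Solving the differential equation: (1 - x)^r sum_n c_n x^n = 1, i.e. the
   negative binomial series sum_n c_n x^n = (1 - x)^(-r) on [0, 1). *)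
Lemma nb_coef_series (r x : R) : 0 < r -> 0 <= x < 1 ->
  Rpower (1 - x) r * PSeries (nb_coef r) x = 1.
Proof.
  intros hr hx.
  set (F := fun t => exp (r * ln (1 - t)) * PSeries (nb_coef r) t).
  assert (F0 : F 0 = 1).
  { unfold F; rewrite PSeries_0, Rminus_0_r, ln_1, Rmult_0_r, exp_0.
    unfold nb_coef; simpl; field. }
  change (F x = 1); rewrite <- F0.
  destruct (Req_dec x 0) as [x0 | xpos]; [now rewrite x0|].
  symmetry; apply eq_is_derive; [|lra].
  intros t ht; assert (htt : Rabs t < 1) by (rewrite Rabs_pos_eq; lra).
  assert (weight_derive : is_derive (fun t => exp (r * ln (1 - t))) t
                            (exp (r * ln (1 - t)) * (r * (-1 / (1 - t))))).
  { auto_derive; [lra|]. replace (1 + - t) with (1 - t) by ring; field; lra. }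
  pose proof (is_derive_mult _ _ t _ _ weight_derive
                (is_derive_PSeries (nb_coef r) t (nb_coef_inside r t hr htt))
                Rmult_comm) as product_derive.
  assert (derivative_zero :
    exp (r * ln (1 - t)) * (r * (-1 / (1 - t))) * PSeries (nb_coef r) t
    + exp (r * ln (1 - t)) * PSeries (PS_derive (nb_coef r)) t = 0).
  { pose proof (nb_coef_ode r t hr htt) as ode.
    replace (PSeries (PS_derive (nb_coef r)) t)
      with (r * PSeries (nb_coef r) t / (1 - t)) by (rewrite <- ode; field; lra).
    field; lra. }
  change (@zero R_NormedModule) with 0; rewrite <- derivative_zero.
  exact product_derive.
Qed.

Lemma ex_pseries_terms (a : nat -> R) (x : R) :
  ex_pseries a x -> ex_series (fun k => a k * x ^ k).
Proof.
  apply ex_series_ext; intro n; change (scal ?u ?v) with (u * v).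
  rewrite pow_n_pow; change (x ^ n * a n = a n * x ^ n); ring.
Qed.

Section NegativeBinomial.

Variables r p : R.
Hypothesis r_pos : 0 < r.
Hypothesis p_range : 0 < p < 1.

Let pi := nb_pmf r p.

Lemma q_inside : Rabs (1 - p) < 1.
Proof. rewrite Rabs_pos_eq; lra. Qed.

Lemma nb_pmf_coef (j : nat) : pi j = Rpower p r * (nb_coef r j * (1 - p) ^ j).
Proof. unfold pi, nb_pmf, nb_coef; ring. Qed.

Lemma nb_pmf_pos (j : nat) : 0 < pi j.
Proof.
  rewrite nb_pmf_coef; apply Rmult_lt_0_compat; [apply exp_pos|].
  apply Rmult_lt_0_compat; [now apply nb_coef_pos | apply pow_lt; lra].
Qed.

Lemma nb_pmf_rec (j : nat) : INR (S j) * pi (S j) = (1 - p) * (r + INR j) * pi j.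
Proof.
  rewrite !nb_pmf_coef; simpl pow.
  replace (INR (S j) * (Rpower p r * (nb_coef r (S j) * ((1 - p) * (1 - p) ^ j))))
    with (Rpower p r * (1 - p) * (1 - p) ^ j * (INR (S j) * nb_coef r (S j)))
    by ring.
  rewrite nb_coef_rec; ring.
Qed.

Lemma nb_pmf_summable : ex_series pi.
Proof.
  apply (ex_series_ext (fun j => Rpower p r * (nb_coef r j * (1 - p) ^ j)));
    [intro j; symmetry; apply nb_pmf_coef|].
  apply (ex_series_scal_l (Rpower p r) (fun j => nb_coef r j * (1 - p) ^ j)).
  apply ex_pseries_terms, CV_radius_inside.
  exact (nb_coef_inside r _ r_pos q_inside).
Qed.

Lemma nb_pmf_total : Series pi = 1.
Proof.
  rewrite (Series_ext _ (fun j => Rpower p r * (nb_coef r j * (1 - p) ^ j)))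
    by (intro; apply nb_pmf_coef).
  rewrite Series_scal_l.
  pose proof (nb_coef_series r (1 - p) r_pos ltac:(lra)) as gen.
  replace (1 - (1 - p)) with p in gen by ring; exact gen.
Qed.

(* The first moment is finite: j pi_j are the terms of the derivative series. *)
Lemma nb_moment_summable : ex_series (fun j => pi j * INR j).
Proof.
  apply (ex_series_ext
           (fun j => Rpower p r * (PS_incr_1 (PS_derive (nb_coef r)) j * (1 - p) ^ j))).
  { intro j; rewrite nb_coef_incr_derive, nb_pmf_coef.
    change (Rpower p r * (INR j * nb_coef r j * (1 - p) ^ j)
            = Rpower p r * (nb_coef r j * (1 - p) ^ j) * INR j); ring. }
  apply (ex_series_scal_l (Rpower p r)
           (fun j => PS_incr_1 (PS_derive (nb_coef r)) j * (1 - p) ^ j)).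
  apply ex_pseries_terms, ex_pseries_incr_1, ex_pseries_derive.
  exact (nb_coef_inside r _ r_pos q_inside).
Qed.

Lemma nb_dominated_summable (f : nat -> R) :
  (forall j, 0 <= f j <= INR j) -> ex_series (fun j => pi j * f j).
Proof.
  intro f_bounds.
  apply (@ex_series_le R_AbsRing R_CompleteNormedModule _
           (fun j => pi j * INR j)); [|exact nb_moment_summable].
  intro j; change (norm ?x) with (Rabs x).
  pose proof (nb_pmf_pos j); specialize (f_bounds j).
  rewrite Rabs_pos_eq by (apply Rmult_le_pos; lra).
  apply Rmult_le_compat_l; lra.
Qed.

(* Summing the recurrence over j >= K:
   p sum_{j>=K} j pi_j = K pi_K + q r sum_{j>=K} pi_j. *)
Lemma nb_tail_moment (K : nat) :
  p * Series (fun i => pi (K + i) * INR (K + i))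
  = INR K * pi K + (1 - p) * r * Series (fun i => pi (K + i)).
Proof.
  pose proof (proj1 (ex_series_incr_n pi K) nb_pmf_summable) as mass_tail.
  pose proof (proj1 (ex_series_incr_n _ K) nb_moment_summable) as moment_tail.
  pose proof (Series_incr_1 _ moment_tail) as shift; simpl in shift.
  rewrite Nat.add_0_r in shift.
  rewrite (Series_ext (fun i => pi (K + S i) * INR (K + S i))
            (fun i => (1 - p) * r * pi (K + i)
                                  + (1 - p) * (pi (K + i) * INR (K + i)))) in shift.
  2:{ intro i; rewrite Nat.add_succ_r, Rmult_comm, nb_pmf_rec; ring. }
  rewrite Series_plus, !Series_scal_l in shift.
  - lra.
  - exact (ex_series_scal_l _ _ mass_tail).
  - exact (ex_series_scal_l _ _ moment_tail).
Qed.

Lemma nb_mean : mean pi INR = (1 - p) * r / p.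
Proof.
  pose proof (nb_tail_moment 0) as moment; simpl in moment.
  rewrite (Series_ext (fun i => pi i) pi), nb_pmf_total in moment
    by (intro; reflexivity).
  unfold mean; apply (Rmult_eq_reg_l p); [|lra].
  rewrite moment; field; lra.
Qed.

Lemma nb_tail_dev_id (K : nat) : tail_dev pi INR K = INR K * pi K / p.
Proof.
  rewrite (tail_dev_expand pi nb_pmf_summable INR K nb_moment_summable), nb_mean.
  apply (Rmult_eq_reg_l p); [|lra].
  rewrite Rmult_minus_distr_l, nb_tail_moment; field; lra.
Qed.

End NegativeBinomial.

(* The observable (j - z)^+ of the theorem and its complement min(j, z);
   both are nondecreasing in j and lie between 0 and j. *)
Definition excess (z : R) (j : nat) : R := pos_part (INR j - z).
Definition capped (z : R) (j : nat) : R := INR j - excess z j.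

Lemma excess_growing (z : R) : Un_growing (excess z).
Proof.
  intro j; unfold excess, pos_part, Rmax; rewrite S_INR.
  repeat destruct Rle_dec; lra.
Qed.

Lemma capped_growing (z : R) : Un_growing (capped z).
Proof.
  intro j; unfold capped, excess, pos_part, Rmax; rewrite S_INR.
  repeat destruct Rle_dec; lra.
Qed.

Lemma excess_bounds (z : R) (j : nat) : 0 <= z -> 0 <= excess z j <= INR j.
Proof.
  intro hz; pose proof (pos_INR j); unfold excess, pos_part, Rmax.
  destruct Rle_dec; lra.
Qed.

Lemma capped_bounds (z : R) (j : nat) : 0 <= z -> 0 <= capped z j <= INR j.
Proof.
  intro hz; pose proof (pos_INR j); unfold capped, excess, pos_part, Rmax.
  destruct Rle_dec; lra.
Qed.

Lemma g_z_tail_dev (r p z : R) (k : nat) : 0 < r -> 0 < p < 1 ->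
  g_z r p z (S k)
  = - (tail_dev (nb_pmf r p) (excess z) (S k) / (INR (S k) * nb_pmf r p (S k))).
Proof.
  intros r_pos p_range; unfold g_z, tail_dev; f_equal.
  change (nb_stoploss r p z) with (mean (nb_pmf r p) (excess z)).
  unfold Rdiv; rewrite Rmult_comm, <- Series_scal_l.
  apply Series_ext; intro i.
  replace (S k - 1)%nat with k by lia.
  set (E := mean (nb_pmf r p) (excess z)); unfold excess, nb_pmf.
  change (Factorial.fact (S k)) with (S k * Factorial.fact k)%nat.
  rewrite mult_INR, pow_add.
  pose proof (rising_pos r (S k) r_pos); pose proof (rising_pos r (S k + i) r_pos).
  pose proof (INR_fact_neq_0 k); pose proof (INR_fact_neq_0 (S k + i)).
  assert (INR (S k) <> 0) by (apply not_0_INR; lia).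
  assert (0 < Rpower p r) by apply exp_pos.
  assert (0 < (1 - p) ^ S k) by (apply pow_lt; lra).
  field; repeat split; lra.
Qed.

(* The solution is confined to [-1/p, 0]: the centred tails of excess and
   capped are both nonnegative and add up to the centred tail of the identity,
   which is K pi_K / p. *)
Lemma g_z_range (r p z : R) (k : nat) : 0 < r -> 0 < p < 1 -> 0 <= z ->
  - / p <= g_z r p z k <= 0.
Proof.
  intros r_pos p_range z_nonneg.
  pose proof (Rinv_0_lt_compat p (proj1 p_range)).
  destruct k as [|k]; [simpl; lra|].
  pose proof (nb_pmf_pos r p r_pos p_range) as pi_pos.
  assert (pi_nonneg : forall j, 0 <= nb_pmf r p j) by (intro j; apply Rlt_le, pi_pos).
  pose proof (nb_pmf_summable r p r_pos p_range) as pi_summable.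
  pose proof (nb_pmf_total r p r_pos p_range) as pi_total.
  assert (excess_summable : ex_series (fun j => nb_pmf r p j * excess z j))
    by (apply nb_dominated_summable; auto using excess_bounds).
  assert (capped_summable : ex_series (fun j => nb_pmf r p j * capped z j))
    by (apply nb_dominated_summable; auto using capped_bounds).
  assert (excess_tail := tail_dev_nonneg (nb_pmf r p) pi_nonneg pi_summable pi_total
                           (excess z) (S k) (excess_growing z) excess_summable).
  assert (capped_tail := tail_dev_nonneg (nb_pmf r p) pi_nonneg pi_summable pi_total
                           (capped z) (S k) (capped_growing z) capped_summable).
  assert (tails_sum := tail_dev_add (nb_pmf r p) pi_summable (excess z) (capped z) INR (S k)
                         excess_summable capped_summable
                         ltac:(intro j; unfold capped; ring)).
  rewrite nb_tail_dev_id in tails_sum by assumption.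
  rewrite g_z_tail_dev by assumption.
  set (T := tail_dev (nb_pmf r p) (excess z) (S k)) in *.
  set (c := INR (S k) * nb_pmf r p (S k)) in *.
  assert (c_pos : 0 < c)
    by (apply Rmult_lt_0_compat; [apply lt_0_INR; lia | apply pi_pos]).
  pose proof (Rinv_0_lt_compat c c_pos).
  assert (ratio_bounds : 0 <= T / c <= / p).
  { split; [apply Rmult_le_pos; lra|].
    replace (/ p) with ((c / p) / c) by (field; lra).
    apply Rmult_le_compat_r; lra. }
  lra.
Qed.

Lemma inv_le_Rpower (p s : R) : 0 < p <= 1 -> 1 <= s -> / p <= Rpower p (- s).
Proof.
  intros p_range s_ge1.
  assert (inv_ge1 : 1 <= / p)
    by (rewrite <- Rinv_1; apply Rinv_le_contravar; lra).
  replace (Rpower p (- s)) with (Rpower (/ p) s)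
    by (unfold Rpower; rewrite ln_Rinv by lra; f_equal; ring).
  rewrite <- (Rpower_1 (/ p)) at 1 by lra.
  now apply Rle_Rpower.
Qed.

(* Lemma 2.1: both bounds follow from -1/p <= g_z <= 0 (at k and k+1)
   together with 1/p <= p^(-(r+1)). *)
Theorem lemma2p1 (r p z : R) (hr : 1 < r) (hp0 : 0 < p) (hp1 : p < 1)
  (hz : 0 <= z) :
  forall k : nat,
    Rabs (g_z r p z k) <= Rpower p (- (r + 1)) /\
    Rabs (g_z r p z (S k) - g_z r p z k) <= 2 * Rpower p (- (r + 1)) - / p.
Proof.
  intro k.
  assert (p_range : 0 < p < 1) by lra.
  assert (r_pos : 0 < r) by lra.
  pose proof (inv_le_Rpower p (r + 1) ltac:(lra) ltac:(lra)) as inv_le.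
  pose proof (g_z_range r p z k r_pos p_range hz).
  pose proof (g_z_range r p z (S k) r_pos p_range hz).
  split; apply Rabs_le; lra.
Qed.
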